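(* Let $p$ be an odd prime, let $d>1$ be an integer, and let $q$ be an even power of $p$ with $q \equiv 1 \pmod{2d}$. Then the clique number of the generalized Paley graph $GP(q,d)$ satisfies $\omega\big(GP(q,d)\big)=\sqrt{q}$ if and only if $d \mid (\sqrt{q}+1)$. In particular, if $d \nmid (\sqrt{q}+1)$, then $\omega\big(GP(q,d)\big) \leq \sqrt{q}-1$.
   Context: For a prime power $q$ and an integer $d>1$ with $d \mid q-1$, the $d$-Paley graph $GP(q,d)$ is the graph with vertex set $\mathbb{F}_q$ in which two distinct vertices $x,y$ are adjacent if and only if $x-y$ is a $d$-th power in $\mathbb{F}_q^*$. $\omega(X)$ denotes the clique number (size of a largest clique) of a graph $X$. *)

From mathcomp Require Import all_boot all_algebra all_field.
Set Implicit Arguments. Unset Strict Implicit. Unset Printing Implicit Defensive.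
Import GRing.Theory.
Local Open Scope ring_scope.

Definition is_dth_power (F : finFieldType) (d : nat) (x : F) : bool :=
  (x != 0) && [exists y : F, y ^+ d == x].

Definition paley_adj (F : finFieldType) (d : nat) (x y : F) : bool :=
  (x != y) && is_dth_power d (x - y).

Definition is_paley_clique (F : finFieldType) (d : nat) (S : {set F}) : bool :=
  [forall x in S, forall y in S, (x != y) ==> paley_adj d x y].

Definition paley_clique_number (F : finFieldType) (d : nat) : nat :=
  \max_(S : {set F} | is_paley_clique d S) #|S|.

(* Let D be the subgroup of nonzero d-th powers of F^* and nu a nonzero non-d-th power.
   For a clique S the map (a, b) |-> a + nu * b is injective on S x S, since
   a - a' = nu * (b' - b) would make nu a quotient of two elements of D; hence
   omega <= sqrt q = m.  If d | m + 1, every nonzero element of the subfield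
   {x | x ^ m = x} of order m is an (m + 1)-th power, hence a d-th power, so this
   subfield is a clique of size m.
   Conversely let C be a clique of size m, psi a nontrivial additive character and
   S(b) = sum_(c in C) psi (b * c).  Now C + nu C = F, so S(b) S(nu b) = 0 for b <> 0:
   the b <> 0 with S(b) <> 0 lie in a single coset of D, on which the Gauss period
   eta(b) = sum_(y in D) psi (b * y) is a constant algebraic integer E.  Evaluating
   sum_b |S(b)|^2 and sum_b |S(b)|^2 eta(b) by orthogonality gives
   m = (m + 1) / d + E, so E is a rational algebraic integer and d | m + 1. *)

From mathcomp Require Import all_boot all_algebra all_field.
From mathcomp Require Import cyclic zify ring.
Set Implicit Arguments. Unset Strict Implicit. Unset Printing Implicit Defensive.
Import GRing.Theory Num.Theory.
Local Open Scope ring_scope.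

Lemma prim_root_neq0 (R : nzRingType) n (z : R) : n.-primitive_root z -> z != 0.
Proof.
move=> z_prim; apply/eqP => z0; have := prim_expr_order z_prim.
by rewrite z0 expr0n gtn_eqF ?(prim_order_gt0 z_prim) // => /esym/eqP; rewrite oner_eq0.
Qed.

Section FinFieldUnits.
Variable F : finFieldType.
Local Notation n := #|F|.-1.

Lemma finField_card_pred_gt0 : (0 < n)%N.
Proof. by rewrite -ltnS prednK ?finNzRing_gt1 // ltnW ?finNzRing_gt1. Qed.

Lemma finField_unit_expr (x : F) : x != 0 -> x ^+ n = 1.
Proof.
move=> x_nz; apply: (mulfI x_nz); rewrite -exprS prednK ?expf_card ?mulr1 //.
by rewrite ltnW ?finNzRing_gt1.
Qed.

Lemma finField_prim_root : exists z : F, n.-primitive_root z.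
Proof.
have /hasP[z _ z_prim] : has n.-primitive_root (enum [set~ (0 : F)]).
  apply: has_prim_root; first exact: finField_card_pred_gt0.
  - apply/allP => x; rewrite mem_enum !inE => x_nz.
    by rewrite unity_rootE finField_unit_expr.
  - exact: enum_uniq.
  - by rewrite -cardE cardsC1.
by exists z.
Qed.

Lemma finField_prim_rootX (z x : F) : n.-primitive_root z -> x != 0 ->
  exists2 i, (i < n)%N & x = z ^+ i.
Proof.
move=> z_prim x_nz.
by have [i ->] := prim_rootP z_prim (finField_unit_expr x_nz); exists i.
Qed.

End FinFieldUnits.

Section DthPowers.
Variables (F : finFieldType) (d : nat).
Implicit Types x y : F.

Lemma dth_power_neq0 x : is_dth_power d x -> x != 0.
Proof. by case/andP. Qed.

Lemma dth_powerM x y : is_dth_power d x -> is_dth_power d y -> is_dth_power d (x * y).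
Proof.
case/andP=> x_nz /existsP[a /eqP ax] /andP[y_nz /existsP[b /eqP yb]].
apply/andP; split; first exact: mulf_neq0.
by apply/existsP; exists (a * b); rewrite exprMn ax yb.
Qed.

Lemma dth_powerV x : is_dth_power d x -> is_dth_power d x^-1.
Proof.
case/andP=> x_nz /existsP[a /eqP ax].
apply/andP; split; first by rewrite invr_eq0.
by apply/existsP; exists a^-1; rewrite exprVn ax.
Qed.

Lemma dth_power_dvd e x : (d %| e)%N -> is_dth_power e x -> is_dth_power d x.
Proof.
move=> /dvdnP[k ->] /andP[x_nz /existsP[a /eqP ax]].
apply/andP; split => //.
by apply/existsP; exists (a ^+ k); rewrite -exprM ax.
Qed.

Hypothesis d_dvd : (d %| #|F|.-1)%N.
Local Notation n := #|F|.-1.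

Let d_gt0 : (0 < d)%N.
Proof. exact: dvdn_gt0 (finField_card_pred_gt0 F) d_dvd. Qed.

Lemma dth_power_prim_rootX (z : F) i : n.-primitive_root z ->
  is_dth_power d (z ^+ i) = (d %| i)%N.
Proof.
move=> z_prim; have z_nz : z ^+ i != 0 by rewrite expf_neq0 ?(prim_root_neq0 z_prim).
rewrite /is_dth_power z_nz; apply/existsP/idP => [[y /eqP zi]|/dvdnP[k ->]].
  have y_nz : y != 0 by apply: contraNneq z_nz => y0; rewrite -zi y0 expr0n gtn_eqF.
  have [j _ yj] := finField_prim_rootX z_prim y_nz.
  move/eqP: zi; rewrite yj -exprM (eq_prim_root_expr z_prim) => /eqP/(congr1 (modn^~ d)).
  by rewrite !modn_dvdm // /dvdn => <-; rewrite modnMl.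
by exists (z ^+ k); rewrite -exprM mulnC.
Qed.

Lemma dth_powerE x : is_dth_power d x = (x != 0) && (x ^+ (n %/ d) == 1).
Proof.
have [z z_prim] := finField_prim_root F.
have [->|x_nz] := eqVneq x 0; first by rewrite /is_dth_power eqxx.
have [i _ ->] := finField_prim_rootX z_prim x_nz.
rewrite dth_power_prim_rootX // -exprM -(prim_order_dvd z_prim).
rewrite /= -{1}(divnK d_dvd) [(i * _)%N]mulnC dvdn_pmul2l //.
by rewrite divn_gt0 // dvdn_leq // finField_card_pred_gt0.
Qed.

Lemma card_dth_powers : #|[set x : F | is_dth_power d x]| = (n %/ d)%N.
Proof.
have [z z_prim] := finField_prim_root F.
have lt_n (j : 'I_(n %/ d)) : (d * j < n)%N.
  by rewrite -{2}(divnK d_dvd) mulnC ltn_pmul2r.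
have -> : [set x : F | is_dth_power d x] = [set z ^+ (d * j) | j : 'I_(n %/ d)].
  apply/setP => x; rewrite inE; apply/idP/imsetP => [x_d|[j _ ->]]; last first.
    by rewrite dth_power_prim_rootX ?dvdn_mulr.
  have [i lt_i_n xi] := finField_prim_rootX z_prim (dth_power_neq0 x_d).
  move: x_d; rewrite xi dth_power_prim_rootX // => /dvdnP[k ik].
  have lt_k : (k < n %/ d)%N by rewrite -(ltn_pmul2r d_gt0) divnK // -ik.
  by exists (Ordinal lt_k); rewrite // ik mulnC.
rewrite card_imset ?card_ord // => j j' /eqP.
rewrite (eq_prim_root_expr z_prim) !modn_small ?lt_n // eqn_pmul2l // => /eqP.
exact: val_inj.
Qed.

Lemma exists_non_dth_power : (1 < d)%N -> exists2 nu : F, nu != 0 & ~~ is_dth_power d nu.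
Proof.
move=> d_gt1; have [z z_prim] := finField_prim_root F.
exists z; first exact: prim_root_neq0 z_prim.
rewrite -[z]expr1 dth_power_prim_rootX //.
by rewrite dvdn1 gtn_eqF.
Qed.

End DthPowers.

Section PaleyCliques.
Variables (F : finFieldType) (d : nat).
Implicit Types (S : {set F}) (nu : F).

Lemma paley_cliqueP S :
  reflect {in S &, forall x y, x != y -> is_dth_power d (x - y)} (is_paley_clique d S).
Proof.
apply: (iffP forall_inP) => [cl x y xS yS xy | cl x xS].
  by have /forall_inP/(_ y yS)/implyP/(_ xy)/andP[] := cl x xS.
by apply/forall_inP => y yS; apply/implyP => xy; rewrite /paley_adj xy cl.
Qed.

Lemma paley_clique_setX_inj S nu : is_paley_clique d S -> nu != 0 ->
  ~~ is_dth_power d nu -> {in setX S S &, injective (fun u : F * F => u.1 + nu * u.2)}.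
Proof.
move=> /paley_cliqueP cl nu_nz nu_nd [a b] [a' b'] /setXP[aS bS] /setXP[a'S b'S] /= eq_ab.
have e : a - a' = nu * (b' - b).
  have : a - a' - nu * (b' - b) = (a + nu * b) - (a' + nu * b') by ring.
  by rewrite eq_ab subrr => /eqP; rewrite subr_eq0 => /eqP.
have [b'b | b'_neq_b] := eqVneq b' b.
  by move: e; rewrite b'b subrr mulr0 => /eqP; rewrite subr_eq0 => /eqP ->.
have b'b_nz : b' - b != 0 by rewrite subr_eq0.
have a_neq_a' : a != a' by rewrite -subr_eq0 e mulf_neq0.
case/negP: nu_nd; rewrite -(mulfK b'b_nz nu) -e.
exact: dth_powerM (cl _ _ aS a'S a_neq_a') (dth_powerV (cl _ _ b'S bS b'_neq_b)).
Qed.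

Lemma paley_clique_card_sq S nu : is_paley_clique d S -> nu != 0 ->
  ~~ is_dth_power d nu -> (#|S| ^ 2 <= #|F|)%N.
Proof.
move=> cl nu_nz nu_nd; rewrite -mulnn -cardsX.
by rewrite -(card_in_imset (paley_clique_setX_inj cl nu_nz nu_nd)) max_card.
Qed.

Lemma paley_clique_setX_onto S nu : is_paley_clique d S -> nu != 0 ->
  ~~ is_dth_power d nu -> (#|S| ^ 2)%N = #|F| ->
  (fun u : F * F => u.1 + nu * u.2) @: setX S S = [set: F].
Proof.
move=> cl nu_nz nu_nd cardS; apply/eqP; rewrite eqEcard subsetT cardsT.
rewrite (card_in_imset (paley_clique_setX_inj cl nu_nz nu_nd)) cardsX mulnn cardS /=.
exact: leqnn.
Qed.

Lemma exists_max_paley_clique :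
  exists2 C : {set F}, is_paley_clique d C & #|C| = paley_clique_number F d.
Proof.
have [|C clC maxC] := @eq_bigmax_cond _ (fun S : {set F} => is_paley_clique d S) (fun S => #|S|).
  by apply/card_gt0P; exists set0; rewrite unfold_in; apply/paley_cliqueP => x; rewrite inE.
by exists C; rewrite -?maxC.
Qed.

End PaleyCliques.

Section SubfieldClique.
Variables (F : finFieldType) (m : nat).
Hypothesis cardF : #|F| = (m ^ 2)%N.

Let m_gt0 : (0 < m)%N.
Proof. by have := finNzRing_gt1 F; rewrite cardF; case: m. Qed.

Let card_units : #|F|.-1 = ((m + 1) * m.-1)%N.
Proof. by rewrite cardF; case: m m_gt0 => // k _; rewrite addn1 mulSn; lia. Qed.

Lemma subfield_eq_powers :
  [set x : F | x ^+ m == x] = 0 |: [set x : F | is_dth_power (m + 1) x].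
Proof.
apply/setP => x; rewrite !inE dth_powerE ?card_units ?dvdn_mulr // mulKn ?addn1 //.
have [->|x_nz] := eqVneq x 0; first by rewrite expr0n (gtn_eqF m_gt0) eqxx.
have -> : x ^+ m = x * x ^+ m.-1 by rewrite -exprS (prednK m_gt0).
by rewrite -[X in _ == X]mulr1 (inj_eq (mulfI x_nz)).
Qed.

Lemma card_subfield : #|[set x : F | x ^+ m == x]| = m.
Proof.
rewrite subfield_eq_powers cardsU1 card_dth_powers ?card_units ?dvdn_mulr //.
by rewrite inE /is_dth_power eqxx mulKn ?addn1 // add1n (prednK m_gt0).
Qed.

Lemma subfield_paley_clique d : [pchar F].-nat m -> (d %| m + 1)%N ->
  is_paley_clique d [set x : F | x ^+ m == x].
Proof.
move=> m_char d_dvd; apply/paley_cliqueP => x y; rewrite !inE => /eqP xm /eqP ym xy.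
have : x - y \in [set x : F | x ^+ m == x].
  by rewrite inE GRing.exprDn_pchar // GRing.exprNn_pchar // xm ym.
rewrite subfield_eq_powers !inE subr_eq0 (negbTE xy) /=.
exact: dth_power_dvd.
Qed.

End SubfieldClique.

Lemma sum_if_eq (T : finType) (V : nmodType) (A : {pred T}) (t : T) (v : V) :
  \sum_(y in A) (if y == t then v else 0) = if t \in A then v else 0.
Proof.
rewrite big_mkcond (bigD1 t) //= eqxx big1 ?addr0 // => y /negbTE ->.
by case: (y \in A).
Qed.

Lemma dvdn_Aint (d a : nat) (w : algC) :
  (0 < d)%N -> w \in Aint -> d%:R * w = a%:R -> (d %| a)%N.
Proof.
move=> d_gt0 w_int dw; have d_nz : d%:R != 0 :> algC by rewrite pnatr_eq0 -lt0n.
have w_a : w = a%:R / d%:R by rewrite -dw [_ * w]mulrC mulfK.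
have w_rat : w \in Crat by rewrite w_a rpred_div ?rpred_nat.
have /natrP[k wk] : w \is a Num.nat.
  by rewrite natrEint Cint_rat_Aint // w_a divr_ge0 ?ler0n.
by move/eqP: dw; rewrite wk -natrM eqr_nat => /eqP <-; apply: dvdn_mulr.
Qed.

Lemma solve_period_identity (K : fieldType) (q M N E d : K) :
  M != 0 -> M != 1 -> q = M * M -> N * d = q - 1 ->
  q * M * (M - 1) = M * M * N + E * (q * M - M * M) -> d * (M - E) = M + 1.
Proof.
move=> M_nz M_neq1 -> N_d identity; apply/eqP; rewrite -subr_eq0.
have MM1_nz : M * M * (M - 1) != 0 by rewrite !mulf_neq0 // subr_eq0.
rewrite -(mulIr_eq0 _ (mulIf MM1_nz)); apply/eqP.
transitivity (d * (M * M * M * (M - 1) - (M * M * N + E * (M * M * M - M * M)))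
  + M * M * (N * d - (M * M - 1))); first by ring.
by rewrite identity N_d !subrr !mulr0 addr0.
Qed.

Section AdditiveCharacterSums.
Variables (F : finFieldType) (psi : F -> algC) (r : nat).
Hypotheses (psiD : {morph psi : x y / x + y >-> x * y}) (r_gt0 : (0 < r)%N)
  (psi_root : forall x, psi x ^+ r = 1) (psi_nontrivial : exists x, psi x != 1).
Implicit Types (x y b : F).
Local Notation q := (#|F|%:R : algC).

Lemma psi_neq0 x : psi x != 0.
Proof.
apply: contra_eq_neq (psi_root x) => ->.
by rewrite expr0n gtn_eqF // eq_sym oner_neq0.
Qed.

Lemma psi0 : psi 0 = 1.
Proof. by apply: (mulfI (psi_neq0 0)); rewrite -psiD addr0 mulr1. Qed.

Lemma psi_unity_root x : r.-unity_root (psi x).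
Proof. by rewrite unity_rootE psi_root. Qed.

Lemma sum_psi_mul_eq0 a : a != 0 -> \sum_x psi (a * x) = 0.
Proof.
move=> a_nz; have [x0 psi_x0] := psi_nontrivial.
have shift : \sum_x psi x = \sum_x psi x * psi x0.
  by rewrite (reindex_inj (addIr x0)); apply: eq_bigr => x _; rewrite psiD.
have : (\sum_x psi x) * (psi x0 - 1) = 0 by rewrite mulrBr mulr1 mulr_suml -shift subrr.
rewrite (reindex_inj (mulfI a_nz)) => /eqP; rewrite mulf_eq0 subr_eq0 (negbTE psi_x0) orbF.
by move/eqP.
Qed.

Lemma sum_psi_mul x : \sum_b psi (b * x) = if x == 0 then q else 0.
Proof.
have [->|x_nz] := eqVneq x 0.
  by under eq_bigr do rewrite mulr0 psi0; rewrite sumr_const cardT -cardE.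
by under eq_bigr do rewrite mulrC; rewrite sum_psi_mul_eq0.
Qed.

Variables (d : nat) (C : {set F}).

Definition char_sum b := \sum_(c in C) psi (b * c).
Definition gauss_period b := \sum_(y in [set y : F | is_dth_power d y]) psi (b * y).

Lemma char_sum0 : char_sum 0 = #|C|%:R.
Proof. by rewrite /char_sum; under eq_bigr do rewrite mul0r psi0; rewrite sumr_const. Qed.

Lemma gauss_period0 : gauss_period 0 = #|[set y : F | is_dth_power d y]|%:R.
Proof. by rewrite /gauss_period; under eq_bigr do rewrite mul0r psi0; rewrite sumr_const. Qed.

(* [char_sum (- b)] is the complex conjugate of [char_sum b]. *)
Lemma char_sum_normE b :
  char_sum b * char_sum (- b) = \sum_(c in C) \sum_(c' in C) psi (b * (c - c')).
Proof.
rewrite /char_sum big_distrlr /=; apply: eq_bigr => c _; apply: eq_bigr => c' _.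
by rewrite -psiD mulNr mulrBr.
Qed.

Lemma sum_char_sum_norm : \sum_b char_sum b * char_sum (- b) = q * #|C|%:R.
Proof.
under eq_bigr do rewrite char_sum_normE.
rewrite exchange_big /= mulr_natr -sumr_const.
apply: eq_bigr => c cC; rewrite exchange_big /=.
under eq_bigr do rewrite sum_psi_mul subr_eq0 eq_sym.
by rewrite sum_if_eq cC.
Qed.

Lemma sum_char_sum_norm_period : is_paley_clique d C ->
  \sum_b char_sum b * char_sum (- b) * gauss_period b = q * #|C|%:R * (#|C|%:R - 1).
Proof.
move=> /paley_cliqueP clC.
have expand b : char_sum b * char_sum (- b) * gauss_period b =
    \sum_(c in C) \sum_(c' in C) \sum_(y in [set y : F | is_dth_power d y])
      psi (b * (c - c' + y)).
  rewrite char_sum_normE mulr_suml; apply: eq_bigr => c _.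
  rewrite mulr_suml; apply: eq_bigr => c' _; rewrite mulr_sumr.
  by apply: eq_bigr => y _; rewrite -psiD -mulrDr.
under eq_bigr do rewrite expand.
rewrite exchange_big /=.
have -> : q * #|C|%:R * (#|C|%:R - 1) = \sum_(c in C) q * (#|C|%:R - 1).
  by rewrite sumr_const mulrAC mulr_natr.
apply: eq_bigr => c cC; rewrite exchange_big /=.
have -> : q * (#|C|%:R - 1) = \sum_(c' in C) (q - if c' == c then q else 0).
  by rewrite sumrB sumr_const sum_if_eq cC mulrBr mulr1 mulr_natr.
apply: eq_bigr => c' c'C; rewrite exchange_big /=.
under eq_bigr do rewrite sum_psi_mul addrC addr_eq0 opprB.
rewrite sum_if_eq inE; have [->|c'c] := eqVneq c' c.
  by rewrite subrr /is_dth_power eqxx subrr.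
by rewrite clC // subr0.
Qed.

Hypotheses (clC : is_paley_clique d C) (cardC : (#|C| ^ 2)%N = #|F|).

Lemma char_sum_mul_eq0 b nu : b != 0 -> nu != 0 -> ~~ is_dth_power d nu ->
  char_sum b * char_sum (nu * b) = 0.
Proof.
move=> b_nz nu_nz nu_nd.
pose f (u : F * F) := u.1 + nu * u.2.
have -> : char_sum b * char_sum (nu * b) = \sum_(u in setX C C) psi (b * f u).
  rewrite /char_sum big_distrlr /= pair_big_dep /=.
  apply: eq_big => [[c c']|[c c'] _] /=; first by rewrite in_setX.
  by rewrite -psiD /f mulrDr mulrCA mulrA.
transitivity (\sum_(x in f @: setX C C) psi (b * x)).
  by rewrite big_imset // /f; exact: paley_clique_setX_inj clC nu_nz nu_nd.
rewrite (paley_clique_setX_onto clC nu_nz nu_nd cardC).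
by under eq_bigl do rewrite in_setT; rewrite sum_psi_mul_eq0.
Qed.

Lemma gauss_period_eq b b' : b != 0 -> b' != 0 ->
  char_sum b != 0 -> char_sum b' != 0 -> gauss_period b = gauss_period b'.
Proof.
move=> b_nz b'_nz Sb Sb'; set t := b / b'.
have t_nz : t != 0 by rewrite mulf_neq0 ?invr_eq0.
have t_d : is_dth_power d t.
  apply/negPn/negP => t_nd; have := char_sum_mul_eq0 b'_nz t_nz t_nd.
  by rewrite /t divfK // => /eqP; rewrite mulf_eq0 (negbTE Sb) (negbTE Sb').
rewrite /gauss_period [RHS](reindex_inj (mulfI t_nz)) /=.
apply: eq_big => [y|y _]; last by rewrite mulrCA mulrA divfK.
rewrite !inE; apply/idP/idP => [y_d|]; first exact: dth_powerM.
by move/(dth_powerM (dth_powerV t_d)); rewrite mulKf.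
Qed.

Lemma gauss_period_const : exists2 E, E \in Aint & forall b, b != 0 ->
  char_sum b * char_sum (- b) * gauss_period b = char_sum b * char_sum (- b) * E.
Proof.
have [b0 /andP[b0_nz Sb0]|] := pickP (fun b => (b != 0) && (char_sum b != 0)); last first.
  move=> S0; exists 0 => [|b b_nz]; first exact: rpred0.
  by have := S0 b; rewrite b_nz /= => /negbFE/eqP ->; rewrite !mul0r.
exists (gauss_period b0) => [|b b_nz].
  by apply: rpred_sum => y _; apply: Aint_unity_root r_gt0 (psi_unity_root _).
have [-> | Sb] := eqVneq (char_sum b) 0; first by rewrite !mul0r.
by rewrite (gauss_period_eq b_nz b0_nz Sb Sb0).
Qed.

Lemma max_paley_clique_identity : exists2 E, E \in Aint &
  q * #|C|%:R * (#|C|%:R - 1) = #|C|%:R * #|C|%:R * #|[set y : F | is_dth_power d y]|%:R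
    + E * (q * #|C|%:R - #|C|%:R * #|C|%:R).
Proof.
have [E E_int E_const] := gauss_period_const; exists E; first exact: E_int.
have norm0 : \sum_(b | b != 0) char_sum b * char_sum (- b) = q * #|C|%:R - #|C|%:R * #|C|%:R.
  by rewrite -sum_char_sum_norm [in RHS](bigD1 0) //= oppr0 char_sum0 addrAC subrr add0r.
rewrite -(sum_char_sum_norm_period clC) (bigD1 0) //= oppr0 char_sum0 gauss_period0.
congr (_ + _); rewrite -norm0 mulr_sumr.
by apply: eq_bigr => b b_nz; rewrite E_const // mulrC.
Qed.

Hypothesis d_dvd : (d %| #|F|.-1)%N.

Lemma max_paley_clique_dvd : (d %| #|C| + 1)%N.
Proof.
have [E E_int identity] := max_paley_clique_identity.
have m_gt1 : (1 < #|C|)%N by rewrite -(ltn_exp2r _ _ (isT : 0 < 2)%N) cardC finNzRing_gt1.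
have N_d : #|[set y : F | is_dth_power d y]|%:R * d%:R = q - 1.
  rewrite -natrM card_dth_powers // divnK // -subn1 natrB //.
  exact: ltnW (finNzRing_gt1 F).
apply: (@dvdn_Aint _ _ (#|C|%:R - E) (dvdn_gt0 (finField_card_pred_gt0 F) d_dvd)).
  by rewrite rpredB // rpred_nat.
rewrite natrD; apply: (solve_period_identity _ _ _ N_d identity).
- by rewrite pnatr_eq0 -lt0n ltnW.
- by rewrite pnatr_eq1 gtn_eqF.
- by rewrite -cardC -natrM mulnn.
Qed.

End AdditiveCharacterSums.

Lemma prim_root_exprFpD p (zeta : algC) (a b : 'F_p) : prime p ->
  p.-primitive_root zeta -> zeta ^+ (a + b)%R = zeta ^+ a * zeta ^+ b.
Proof.
move=> p_pr zeta_prim; rewrite -exprD -[RHS](expr_mod _ (prim_expr_order zeta_prim)).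
by congr (_ ^+ _); exact (congr1 (fun k => (a + b) %% k)%N (Fp_cast p_pr)).
Qed.

Lemma exists_additive_character (F : finFieldType) p : p \in [pchar F] ->
  exists psi : F -> algC, [/\ {morph psi : x y / x + y >-> x * y},
    forall x, psi x ^+ p = 1 & exists x, psi x != 1].
Proof.
move=> pcharF; have p_pr := pcharf_prime pcharF.
pose V := pPrimeCharType pcharF.
pose coordV i (x : V) := coord (vbasis (fullv : {vspace V})) i x.
have [i coord1] : exists i, coordV i 1 != 0.
  apply/existsP; apply: contraLR (oner_neq0 (V : nzRingType)) => /existsPn coord0.
  rewrite negbK (coord_vbasis (memvf (1 : V))) big1 // => i _.
  by have /negbNE/eqP := coord0 i; rewrite /coordV => ->; rewrite scale0r.
have [zeta zeta_prim] := C_prim_root_exists (prime_gt0 p_pr).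
exists (fun x : F => zeta ^+ coordV i x); split.
- by move=> x y; rewrite /coordV linearD -prim_root_exprFpD.
- by move=> x; rewrite exprAC (prim_expr_order zeta_prim) expr1n.
exists 1; rewrite -(prim_order_dvd zeta_prim).
have c_lt : (coordV i 1%R < p)%N by apply: leq_trans (ltn_ord _) _; rewrite Fp_cast.
have c_gt0 : (0 < coordV i 1%R)%N.
  by rewrite lt0n; apply: contra coord1 => /eqP c0; apply/eqP/val_inj.
by apply/negP => /(dvdn_leq c_gt0); rewrite leqNgt c_lt.
Qed.

Section PaleyCliqueNumber.
Variables (F : finFieldType) (d m : nat).
Hypotheses (cardF : #|F| = (m ^ 2)%N) (d_gt1 : (1 < d)%N) (d_dvd : (d %| #|F|.-1)%N).

Lemma paley_clique_number_le_sqrt : (paley_clique_number F d <= m)%N.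
Proof.
have [nu nu_nz nu_nd] := exists_non_dth_power d_dvd d_gt1.
apply/bigmax_leqP => S clS; rewrite -(leq_exp2r _ _ (isT : 0 < 2)%N) -cardF.
exact: paley_clique_card_sq clS nu_nz nu_nd.
Qed.

Lemma paley_clique_number_eq_sqrt : [pchar F].-nat m ->
  paley_clique_number F d = m <-> (d %| m + 1)%N.
Proof.
move=> m_char; split => [omega_m | d_dvd_m1].
  have [C clC cardC] := exists_max_paley_clique F d.
  have [p /prime_gt0 p_gt0 pcharF] := finPcharP F.
  have [psi [psiD psi_root psi_nt]] := exists_additive_character pcharF.
  rewrite -omega_m -cardC.
  apply: (max_paley_clique_dvd (r := p) psiD p_gt0 psi_root psi_nt clC _ d_dvd).
  by rewrite cardC omega_m cardF.
apply/eqP; rewrite eqn_leq paley_clique_number_le_sqrt -{1}(card_subfield cardF).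
exact: leq_bigmax_cond (subfield_paley_clique cardF m_char d_dvd_m1).
Qed.

End PaleyCliqueNumber.

Local Close Scope ring_scope.

Theorem theorem1p6 (p k d : nat) (F : finFieldType) :
  prime p -> odd p -> (0 < k)%N -> (1 < d)%N ->
  #|F| = ((p ^ k) ^ 2)%N ->
  ((p ^ k) ^ 2 = 1 %[mod 2 * d])%N ->
  (paley_clique_number F d = p ^ k <-> (d %| p ^ k + 1)%N) /\
  (~~ (d %| p ^ k + 1)%N -> (paley_clique_number F d <= p ^ k - 1)%N).
Proof.
(* [odd p] and [0 < k] follow from the other hypotheses. *)
move=> p_pr _ _ d_gt1 cardF q_mod; set m := p ^ k in cardF q_mod *.
have m_char : [pchar F]%R.-nat m.
  have pcharF : p \in [pchar F]%R.
    by apply: (@card_finPcharP _ p (k * 2)); rewrite // cardF expnM.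
  by rewrite pnatX (pnatE _ p_pr) pcharF.
have d_dvd : d %| #|F|.-1.
  apply: dvdn_trans (dvdn_mull 2 (dvdnn d)) _.
  by rewrite cardF -subn1 -eqn_mod_dvd ?q_mod // expn_gt0 expn_gt0 prime_gt0.
have omega_le := paley_clique_number_le_sqrt cardF d_gt1 d_dvd.
have omega_iff := paley_clique_number_eq_sqrt cardF d_gt1 d_dvd m_char.
split => // m_nd.
have omega_lt : paley_clique_number F d < m.
  by rewrite ltn_neqAle omega_le andbT; apply: contra m_nd => /eqP/omega_iff.
by rewrite subn1 -ltnS (ltn_predK omega_lt).
Qed.
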